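(* Let $s,m$ be positive integers with $m$ odd and $n=sm$. Let $k$ be a positive integer with $t=\gcd(n,k)$ such that $\mathbb{F}_{2^t}\subseteq\mathbb{F}_{2^s}$ and $n/t$ is odd. Fix $\alpha\in\mathbb{F}_{2^s}\setminus\{0\}$ and let \[ G(x)=x^{2^k+1}+\alpha(x^{2^s}+x)^{2^n-1}+\alpha=\begin{cases}x^{2^k+1}+\alpha, & x\in\mathbb{F}_{2^s},\\ x^{2^k+1}, & x\notin\mathbb{F}_{2^s},\end{cases} \] as a function $\mathbb{F}_{2^n}\to\mathbb{F}_{2^n}$. Then $\delta_{G,c}\leq 3$ for every $c\in\mathbb{F}_{2^t}\setminus\{1\}$.
   Context: For $F:\mathbb{F}_{2^n}\to\mathbb{F}_{2^n}$ and $c\in\mathbb{F}_{2^n}$, let ${}_c\Delta_F(a,b)=\#\{x\in\mathbb{F}_{2^n}: F(x+a)-cF(x)=b\}$ and the $c$-differential uniformity is $\delta_{F,c}=\max\{{}_c\Delta_F(a,b): a,b\in\mathbb{F}_{2^n},\ a\neq 0\text{ if } c=1\}$. *)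

From HB Require Import structures.
From mathcomp Require Import all_boot all_order all_algebra all_field.
Set Implicit Arguments. Unset Strict Implicit. Unset Printing Implicit Defensive.
Import GRing.Theory.
Local Open Scope ring_scope.

(* The subfield F_{2^r} of a finite field F of characteristic 2, viewed as the
   set of fixed points of x |-> x^(2^r). *)
Definition subF (F : finFieldType) (r : nat) : {set F} :=
  [set x : F | x ^+ (2 ^ r) == x].

Definition cDelta (F : finFieldType) (f : F -> F) (c a b : F) : nat :=
  #|[set x : F | f (x + a) - c * f x == b]|.

Definition cdu (F : finFieldType) (f : F -> F) (c : F) : nat :=
  \max_(a : F | (c != 1) || (a != 0)) \max_(b : F) cDelta f c a b.

Definition Gfun (F : finFieldType) (n s k : nat) (alpha : F) (x : F) : F :=
  x ^+ (2 ^ k + 1) + alpha * (x ^+ (2 ^ s) + x) ^+ (2 ^ n - 1) + alpha.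

From mathcomp Require Import all_boot all_algebra all_field.
From mathcomp Require Import ring.
Set Implicit Arguments. Unset Strict Implicit. Unset Printing Implicit Defensive.
Import GRing.Theory.
Local Open Scope ring_scope.

(* Write q = 2^k.  The Gold map x |-> x^(q+1) is a permutation of F_(2^n) when
   n / gcd(n, k) is odd, and for c in F_(2^t), c <> 1, so is
   D_a(x) = (x + a)^(q+1) - c x^(q+1): with d = 1 - c, which is fixed by x |-> x^q,
   one has d D_a(x) = (d x + a)^(q+1) + (d - 1) a^(q+1).  Since G differs from
   the Gold map by a function of the membership x \in F_(2^s),
   G(x + a) - c G(x) = D_a(x) + h(x \in F_(2^s), x + a \in F_(2^s)), so each
   solution of G(x + a) - c G(x) = b is determined by its pair of memberships.
   Only three pairs occur, because for x \in F_(2^s) the membership of x + a is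
   that of a. *)

Lemma gcdn_mul2_odd (n k : nat) : (0 < k)%N -> odd (n %/ gcdn n k) ->
  gcdn (k * 2) n = gcdn n k.
Proof.
move=> k_gt0 odd_nt; set t := gcdn n k.
have t_gt0 : (0 < t)%N by rewrite gcdn_gt0 k_gt0 orbT.
have def_n : n = (n %/ t * t)%N by rewrite divnK // dvdn_gcdl.
have def_k : k = (k %/ t * t)%N by rewrite divnK // dvdn_gcdr.
have coprime_nk : gcdn (n %/ t) (k %/ t) = 1%N.
  by apply/eqP; rewrite -(eqn_pmul2r t_gt0) mul1n muln_gcdl -def_n -def_k.
rewrite gcdnC {1}def_n def_k mulnAC -muln_gcdl Gauss_gcdl ?coprime_nk ?mul1n //.
by rewrite /coprime gcdnC -/(coprime 2 _) coprime2n.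
Qed.

Section FixedFields.

Variable F : finFieldType.

Lemma subF_dvd (d r : nat) (x : F) : (d %| r)%N -> x \in subF F d -> x \in subF F r.
Proof.
move=> /dvdnP[j ->]; rewrite !inE => /eqP x_d; apply/eqP.
elim: j => [|j IHj]; first by rewrite expr1.
by rewrite mulSn expnD exprM x_d IHj.
Qed.

Lemma subF_gcd (a b : nat) (x : F) : (0 < a)%N ->
  x \in subF F a -> x \in subF F b -> x \in subF F (gcdn a b).
Proof.
move=> a_gt0 x_a x_b; have [u _ /dvdnP[v def_v]] := Bezoutl b a_gt0.
have /[!inE]/eqP x_ub := subF_dvd (dvdn_mull u (dvdnn b)) x_b.
have := subF_dvd (dvdn_mull v (dvdnn a)) x_a.
by rewrite -def_v !inE expnD mulnC exprM x_ub.
Qed.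

Section Char2.

Hypothesis F_char2 : (2 \in [pchar F])%N.

Lemma expr_pow2D (r : nat) (x y : F) :
  (x + y) ^+ (2 ^ r) = x ^+ (2 ^ r) + y ^+ (2 ^ r).
Proof.
by apply: exprDn_pchar; rewrite (eq_pnat _ (pcharf_eq F_char2)) pnatX pnatE.
Qed.

Lemma subF_addr (r : nat) (x y : F) : x \in subF F r ->
  (x + y \in subF F r) = (y \in subF F r).
Proof. by rewrite !inE expr_pow2D => /eqP ->; rewrite (inj_eq (addrI x)). Qed.

Lemma sqrf_eq1_char2 (z : F) : z ^+ 2 = 1 -> z = 1.
Proof.
move=> z2; have : (z - 1) ^+ (2 ^ 1) == 0.
  by rewrite oppr_pchar2 // expr_pow2D expn1 z2 expr1n addrr_pchar2.
by rewrite expf_eq0 subr_eq0 => /andP[_ /eqP].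
Qed.

End Char2.

Section OrderPow2.

Variable n : nat.
Hypothesis cardF : #|F| = (2 ^ n)%N.

Let F_char2 : (2 \in [pchar F])%N := card_finPcharP cardF (isT : prime 2).

Lemma subF_card (x : F) : x \in subF F n.
Proof. by rewrite inE -cardF expf_card. Qed.

Lemma expr_card_pred (y : F) : y ^+ (2 ^ n - 1) = (y != 0)%:R.
Proof.
have [->|y_neq0] := eqVneq y 0.
  by rewrite expr0n subn_eq0 -cardF leqNgt card_finNzRing_gt1.
apply: (mulfI y_neq0); rewrite mulr1 -exprS subn1 prednK ?expn_gt0 //.
by rewrite -cardF expf_card.
Qed.

Variable k : nat.
Hypotheses (k_gt0 : (0 < k)%N) (odd_nt : odd (n %/ gcdn n k)).

Let subF_k (x : F) : x \in subF F (gcdn n k) -> x \in subF F k.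
Proof. exact/subF_dvd/dvdn_gcdr. Qed.

Lemma gold_inj : injective (fun x : F => x ^+ (2 ^ k + 1)).
Proof.
move=> x y /= xy.
have [y0|y_neq0] := eqVneq y 0.
  by move: xy; rewrite y0 expr0n addn1 => /eqP; rewrite expf_eq0 => /andP[_ /eqP].
set z := x / y.
have z_gold : z ^+ (2 ^ k + 1) = 1 by rewrite exprMn xy exprVn divff ?expf_neq0.
have z_neq0 : z != 0.
  by apply: contra_eq_neq z_gold => ->; rewrite expr0n addn1 eq_sym oner_eq0.
have z_q : z ^+ (2 ^ k) = z^-1.
  by apply: (mulIf z_neq0); rewrite -exprSr -addn1 z_gold mulVf.
have z_2k : z \in subF F (k * 2).
  by rewrite inE muln2 -addnn expnD exprM z_q exprVn z_q invrK.
have /[!inE]/eqP z_k : z \in subF F k.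
  by rewrite subF_k // -gcdn_mul2_odd // subF_gcd ?muln_gt0 ?k_gt0 ?subF_card.
have z1 : z = 1 by apply: (sqrf_eq1_char2 F_char2); rewrite -z_gold exprD z_k expr1 expr2.
by apply: (mulIf (invr_neq0 y_neq0)); rewrite -/z z1 mulfV.
Qed.

Lemma cdiff_gold_inj (c a : F) : c \in subF F (gcdn n k) -> c != 1 ->
  injective (fun x : F => (x + a) ^+ (2 ^ k + 1) - c * x ^+ (2 ^ k + 1)).
Proof.
move=> /subF_k; rewrite inE => /eqP c_q c_neq1 x y /= xy.
set d := 1 - c.
have d_neq0 : d != 0 by rewrite subr_eq0 eq_sym.
have d_q : d ^+ (2 ^ k) = d by rewrite /d oppr_pchar2 // expr_pow2D // expr1n c_q.
have d_cdiff u : d * ((u + a) ^+ (2 ^ k + 1) - c * u ^+ (2 ^ k + 1)) =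
    (d * u + a) ^+ (2 ^ k + 1) + (d - 1) * a ^+ (2 ^ k + 1).
  rewrite !addn1 !exprSr !expr_pow2D // exprMn d_q /d; ring.
have /gold_inj : (d * x + a) ^+ (2 ^ k + 1) = (d * y + a) ^+ (2 ^ k + 1).
  by apply: (addIr ((d - 1) * a ^+ (2 ^ k + 1))); rewrite -!d_cdiff xy.
by move/addIr/(mulfI d_neq0).
Qed.

End OrderPow2.

End FixedFields.

Lemma card_injD_label_le (T L : finType) (V : zmodType) (D : T -> V) (h : L -> V)
    (lab : T -> L) (P : {pred L}) (b : V) :
  injective D -> (forall x, lab x \in P) ->
  (#|[set x | (D x + h (lab x) == b)%R]| <= #|P|)%N.
Proof.
move=> D_inj lab_P; set A := [set x | _].
have lab_inj : {in A &, injective lab}.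
  move=> x y; rewrite !inE => /eqP Dx /eqP Dy lab_xy.
  by apply: D_inj; apply: (addIr (h (lab x))); rewrite Dx lab_xy Dy.
rewrite -(card_in_imset lab_inj); apply/subset_leq_card/subsetP => _ /imsetP[x _ ->].
exact: lab_P.
Qed.

Theorem theorem2p13 (F : finFieldType) (n s m k : nat) (alpha : F) :
  #|F| = (2 ^ n)%N ->
  (0 < s)%N -> (0 < m)%N -> odd m -> n = (s * m)%N ->
  (0 < k)%N ->
  subF F (gcdn n k) \subset subF F s ->
  odd (n %/ gcdn n k) ->
  alpha \in subF F s -> alpha != 0 ->
  forall c : F, c \in subF F (gcdn n k) -> c != 1 ->
    (cdu (Gfun n s k alpha) c <= 3)%N.
Proof.
(* The bound holds without the hypotheses on s, m and alpha. *)
move=> cardF _ _ _ _ k_gt0 _ odd_nt _ _ c c_t c_neq1.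
have F_char2 : (2 \in [pchar F])%N := card_finPcharP cardF (isT : prime 2).
set S := subF F s.
have G_ind x : Gfun n s k alpha x = x ^+ (2 ^ k + 1) + alpha * (x \notin S)%:R + alpha.
  by rewrite /Gfun expr_card_pred // addr_eq0 oppr_pchar2 // /S inE.
apply/bigmax_leqP => a _; apply/bigmax_leqP => b _.
pose h (l : bool * bool) := alpha * (~~ l.2)%:R + alpha - c * (alpha * (~~ l.1)%:R + alpha).
have -> : cDelta (Gfun n s k alpha) c a b =
    #|[set x | (x + a) ^+ (2 ^ k + 1) - c * x ^+ (2 ^ k + 1) + h (x \in S, x + a \in S) == b]|.
  apply: eq_card => x.
  by rewrite [LHS]in_set [RHS]in_set !G_ind /h /=; congr (_ == b); ring.
have lab_P x : (x \in S, x + a \in S) \in predC1 (true, a \notin S).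
  by apply/eqP => -[/subF_addr->]; case: (a \in S).
have D_inj := @cdiff_gold_inj F n cardF k k_gt0 odd_nt c a c_t c_neq1.
apply: leq_trans (card_injD_label_le h b D_inj lab_P) _.
by rewrite cardC1 card_prod card_bool.
Qed.
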